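(* Let $A_0\to A_1\to\cdots$ be an $\omega$-chain in $\mathsf{SquaMS}$ with connecting morphisms $a_{k,\ell}$, and let $(C,(c_k)_k)$ be its colimit in $\mathsf{SquaMS}$. Then $(M\otimes C,(M\otimes c_k)_k)$ is the colimit of the chain $M\otimes A_0\to M\otimes A_1\to\cdots$ with connecting morphisms $M\otimes a_{k,\ell}$.
   Context: Let $M_0=\{(r,s)\in[0,1]^2: r\in\{0,1\}\text{ or } s\in\{0,1\}\}$. A square metric space is a pair $(X,S_X)$ with $X$ a metric space with all distances at most $2$ and $S_X\colon M_0\to X$ injective such that (sq1) for $i\in\{0,1\}$, $r,s\in[0,1]$: $d_X(S_X(i,r),S_X(i,s))=|s-r|$ and $d_X(S_X(r,i),S_X(s,i))=|s-r|$; (sq2) $d_X(S_X(r,s),S_X(t,u))\ge|r-t|+|s-u|$. $\mathsf{SquaMS}$: these objects, with short maps $f$ satisfying $f\circ S_X=S_Y$ as morphisms. Let $N=\{0,1,2\}^2$, $M=N\setminus\{(1,1)\}$, also viewed as points of $\mathbb{R}^2$. For $X$ in $\mathsf{SquaMS}$, $M\otimes X=(M\times X)/\!\sim$, where $\sim$ is generated by $(m,S_X(p))\sim(n,S_X(q))$ whenever $m,n\in M$ differ by exactly $1$ in exactly one coordinate and $(m+p)/3=(n+q)/3$; $m\otimes x$ is the class of $(m,x)$. With $d((a,u),(b,v))=\frac13 d_X(u,v)$ if $a=b$ and $2$ otherwise, $M\otimes X$ has the quotient metric (infimum over finite chains of sums of consecutive distances, $\sim$-related consecutive pairs counting $0$).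 $S_{M\otimes X}(p)=m\otimes S_X(3p-m)$ for any $m\in M$ with $p\in(m+[0,1]^2)/3$; $(M\otimes f)(m\otimes x)=m\otimes f(x)$. *)

From Stdlib Require Import Reals Relations ClassicalEpsilon.
From Coquelicot Require Import Rbar Lub.
Open Scope R_scope.

Definition in_unit (r : R) : Prop := 0 <= r <= 1.

Definition M0 (p : R * R) : Prop :=
  in_unit (fst p) /\ in_unit (snd p) /\
  (fst p = 0 \/ fst p = 1 \/ snd p = 0 \/ snd p = 1).

(* raw data: carrier, distance, and S_X (only its values on M0 matter) *)
Record sqraw := SqRaw {
  car : Type;
  dist : car -> car -> R;
  sqS : R * R -> car }.

Definition is_metric (T : Type) (d : T -> T -> R) : Prop :=
  (forall x y, d x y = 0 <-> x = y) /\
  (forall x y, d x y = d y x) /\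
  (forall x y z, d x z <= d x y + d y z).

Definition is_squams (X : sqraw) : Prop :=
  is_metric (car X) (dist X) /\
  (forall x y, dist X x y <= 2) /\
  (forall p q, M0 p -> M0 q -> sqS X p = sqS X q -> p = q) /\
  (forall i r s, (i = 0 \/ i = 1) -> in_unit r -> in_unit s ->
     dist X (sqS X (i, r)) (sqS X (i, s)) = Rabs (s - r) /\
     dist X (sqS X (r, i)) (sqS X (s, i)) = Rabs (s - r)) /\
  (forall p q, M0 p -> M0 q ->
     dist X (sqS X p) (sqS X q) >= Rabs (fst p - fst q) + Rabs (snd p - snd q)).

Definition is_mor (X Y : sqraw) (f : car X -> car Y) : Prop :=
  (forall x y, dist Y (f x) (f y) <= dist X x y) /\
  (forall p, M0 p -> f (sqS X p) = sqS Y p).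

(* a chain is given by its step maps a_{k,k+1}; a_{k,l} are their composites *)
Definition is_chain (A : nat -> sqraw) (a : forall k, car (A k) -> car (A (S k))) : Prop :=
  (forall k, is_squams (A k)) /\ (forall k, is_mor (A k) (A (S k)) (a k)).

Definition is_colimit (A : nat -> sqraw) (a : forall k, car (A k) -> car (A (S k)))
    (C : sqraw) (c : forall k, car (A k) -> car C) : Prop :=
  is_squams C /\
  (forall k, is_mor (A k) C (c k)) /\
  (forall k x, c (S k) (a k x) = c k x) /\
  (forall (Y : sqraw) (g : forall k, car (A k) -> car Y),
     is_squams Y ->
     (forall k, is_mor (A k) Y (g k)) ->
     (forall k x, g (S k) (a k x) = g k x) ->
     exists! u : car C -> car Y,
       is_mor C Y u /\ (forall k x, u (c k x) = g k x)).

(* ---------- the index set M = {0,1,2}^2 \ {(1,1)} ---------- *)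
Inductive Mpt : Type := m00 | m01 | m02 | m10 | m12 | m20 | m21 | m22.

Definition Mpt_eq_dec (m n : Mpt) : {m = n} + {m <> n}.
Proof. decide equality. Defined.

Definition mx (m : Mpt) : R :=
  match m with m00 | m01 | m02 => 0 | m10 | m12 => 1 | m20 | m21 | m22 => 2 end.
Definition my (m : Mpt) : R :=
  match m with m00 | m10 | m20 => 0 | m01 | m21 => 1 | m02 | m12 | m22 => 2 end.

Definition adjacent (m n : Mpt) : Prop :=
  (Rabs (mx m - mx n) = 1 /\ my m = my n) \/
  (mx m = mx n /\ Rabs (my m - my n) = 1).

Definition gen (X : sqraw) (z w : Mpt * car X) : Prop :=
  exists p q, M0 p /\ M0 q /\ snd z = sqS X p /\ snd w = sqS X q /\
    adjacent (fst z) (fst w) /\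
    (mx (fst z) + fst p) / 3 = (mx (fst w) + fst q) / 3 /\
    (my (fst z) + snd p) / 3 = (my (fst w) + snd q) / 3.

Definition teq (X : sqraw) : relation (Mpt * car X) :=
  clos_refl_sym_trans _ (gen X).

Definition Tcar (X : sqraw) : Type :=
  { P : Mpt * car X -> Prop | exists z, P = teq X z }.

Definition tcls (X : sqraw) (z : Mpt * car X) : Tcar X :=
  exist _ (teq X z) (ex_intro _ z eq_refl).

Definition d0 (X : sqraw) (z w : Mpt * car X) : R :=
  if Mpt_eq_dec (fst z) (fst w) then dist X (snd z) (snd w) / 3 else 2.

Inductive chain_cost (X : sqraw) : Mpt * car X -> Mpt * car X -> R -> Prop :=
| ch_nil z : chain_cost X z z 0
| ch_dist z w y r : chain_cost X w y r -> chain_cost X z y (d0 X z w + r)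
| ch_glue z w y r : teq X z w -> chain_cost X w y r -> chain_cost X z y r.

Definition tdist (X : sqraw) (x y : Tcar X) : R :=
  real (Glb_Rbar (fun r => exists z w,
          proj1_sig x z /\ proj1_sig y w /\ chain_cost X z w r)).

Definition cell (m : Mpt) (p : R * R) : Prop :=
  mx m <= 3 * fst p <= mx m + 1 /\ my m <= 3 * snd p <= my m + 1.

(* any m with p in (m+[0,1]^2)/3 (well-definedness is part of the paper) *)
Definition pick_cell (p : R * R) : Mpt := epsilon (inhabits m00) (fun m => cell m p).

Definition tS (X : sqraw) (p : R * R) : Tcar X :=
  let m := pick_cell p in
  tcls X (m, sqS X (3 * fst p - mx m, 3 * snd p - my m)).

Definition Mtens (X : sqraw) : sqraw := SqRaw (Tcar X) (tdist X) (tS X).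

Definition tinh (X : sqraw) (x : Tcar X) : inhabited (Mpt * car X) :=
  match proj2_sig x with ex_intro z _ => inhabits z end.
Definition trep (X : sqraw) (x : Tcar X) : Mpt * car X :=
  epsilon (tinh X x) (fun z => proj1_sig x z).

Definition Mtens_map (X Y : sqraw) (f : car X -> car Y) (x : Tcar X) : Tcar Y :=
  let z := trep X x in tcls Y (fst z, f (snd z)).

(* [M (x) X] glues eight copies of [X], scaled by 1/3, along the images of their boundary
   squares; the boundary point [S p] of the copy [m] sits at the position [glob m p = (m + p)/3]
   of the unit square.  Along a chain this position moves, in the l1 norm, by at most the cost
   of the chain: by (sq2) inside a copy, and by the l1 diameter 2 of the square when switching
   copies.  Hence the quotient distance of boundary points dominates the l1 distance of their
   positions, which gives (sq2) and the injectivity of [S] for [M (x) X].  A point off the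
   boundary stays at positive distance from the compact set [S(M0)], so the quotient
   pseudometric is a metric, and (sq1) follows by gluing the three thirds of each side.

   In the colimit [C] every point comes from some [A k], because the image of the cocone is
   itself a cocone.  Given a cocone [g k : M (x) A k -> Y], for each cell [m] the maps
   [x |-> g k (m (x) x)] are 1/3-Lipschitz; paired with [c k] they form a cocone into a square
   metric space, whence a 1/3-Lipschitz [F m : C -> Y].  The [F m] agree on glued points and so
   assemble into the unique short map [M (x) C -> Y]. *)

From Stdlib Require Import Reals Lra Relations ClassicalEpsilon Classical.
From Stdlib Require Import FunctionalExtensionality PropExtensionality ProofIrrelevance.
From Stdlib Require Rtopology.
From Coquelicot Require Import Rbar Lub.
Open Scope R_scope.

Ltac Rabs_lra := unfold Rabs in *; repeat match goal with
  | H : context [Rcase_abs ?x] |- _ => destruct (Rcase_abs x)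
  | |- context [Rcase_abs ?x] => destruct (Rcase_abs x) end; lra.

Ltac minmax_lra := unfold Rmax, Rmin in *; repeat destruct (Rle_dec _ _); lra.

Lemma real_Glb_Rbar_bounds (E : R -> Prop) r L :
  E r -> (forall s, E s -> L <= s) -> L <= real (Glb_Rbar E) <= r.
Proof.
  intros Er HL. destruct (Glb_Rbar_correct E) as [Hlb Hglb].
  specialize (Hlb r Er). specialize (Hglb (Finite L) HL).
  destruct (Glb_Rbar E); simpl in *; lra || contradiction.
Qed.

Section SquareMetricSpace.
Variable X : sqraw.
Hypothesis HX : is_squams X.

Lemma dist_0 x : dist X x x = 0.
Proof. apply (proj1 HX); auto. Qed.

Lemma dist_eq0 x y : dist X x y = 0 -> x = y.
Proof. apply (proj1 HX). Qed.

Lemma dist_comm x y : dist X x y = dist X y x.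
Proof. apply (proj1 HX). Qed.

Lemma dist_triangle x y z : dist X x z <= dist X x y + dist X y z.
Proof. apply (proj1 HX). Qed.

Lemma dist_ge0 x y : 0 <= dist X x y.
Proof. pose proof (dist_triangle x y x). rewrite dist_0, (dist_comm y x) in H. lra. Qed.

Lemma dist_le2 x y : dist X x y <= 2.
Proof. apply HX. Qed.

Lemma sqS_inj p q : M0 p -> M0 q -> sqS X p = sqS X q -> p = q.
Proof. apply HX. Qed.

Lemma dist_sqS_vert i r s : i = 0 \/ i = 1 -> in_unit r -> in_unit s ->
  dist X (sqS X (i, r)) (sqS X (i, s)) = Rabs (s - r).
Proof. intros; apply HX; auto. Qed.

Lemma dist_sqS_hor i r s : i = 0 \/ i = 1 -> in_unit r -> in_unit s ->
  dist X (sqS X (r, i)) (sqS X (s, i)) = Rabs (s - r).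
Proof. intros; apply HX; auto. Qed.

Lemma dist_sqS_ge p q : M0 p -> M0 q ->
  Rabs (fst p - fst q) + Rabs (snd p - snd q) <= dist X (sqS X p) (sqS X q).
Proof. intros; apply Rge_le, HX; auto. Qed.

Lemma d0_comm z w : d0 X z w = d0 X w z.
Proof.
  unfold d0. destruct (Mpt_eq_dec (fst z) (fst w)), (Mpt_eq_dec (fst w) (fst z));
    try congruence.
  now rewrite dist_comm.
Qed.

Lemma d0_ge0 z w : 0 <= d0 X z w.
Proof. unfold d0. destruct (Mpt_eq_dec _ _); [pose proof (dist_ge0 (snd z) (snd w))|]; lra. Qed.

Lemma d0_le2 z w : d0 X z w <= 2.
Proof. unfold d0. destruct (Mpt_eq_dec _ _); [pose proof (dist_le2 (snd z) (snd w))|]; lra. Qed.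

Lemma chain_cost_eq z y r r' : chain_cost X z y r -> r = r' -> chain_cost X z y r'.
Proof. now intros ? <-. Qed.

Lemma chain_cost_cat z w y r1 r2 :
  chain_cost X z w r1 -> chain_cost X w y r2 -> chain_cost X z y (r1 + r2).
Proof.
  induction 1 as [z|z w' w r1 _ IH|z w' w r1 T _ IH]; intros H2.
  - apply (chain_cost_eq _ _ _ _ H2). lra.
  - apply (chain_cost_eq _ _ _ _ (ch_dist _ _ _ _ _ (IH H2))). lra.
  - exact (ch_glue _ _ _ _ _ T (IH H2)).
Qed.

Lemma chain_cost_rev z y r : chain_cost X z y r -> chain_cost X y z r.
Proof.
  induction 1 as [z|z w y r _ IH|z w y r T _ IH].
  - apply ch_nil.
  - apply (chain_cost_eq _ _ _ _ (chain_cost_cat _ _ _ _ _ IH (ch_dist _ w z z 0 (ch_nil _ z)))).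
    rewrite d0_comm; lra.
  - apply (chain_cost_eq _ _ _ _ (chain_cost_cat _ _ _ _ _ IH
      (ch_glue _ w z z 0 (rst_sym _ _ _ _ T) (ch_nil _ z)))).
    lra.
Qed.

Lemma chain_cost_ge0 z y r : chain_cost X z y r -> 0 <= r.
Proof. induction 1; auto; try lra. pose proof (d0_ge0 z w); lra. Qed.

End SquareMetricSpace.

Definition glob (m : Mpt) (p : R * R) : R * R := ((mx m + fst p) / 3, (my m + snd p) / 3).

Definition l1 (u v : R * R) : R := Rabs (fst u - fst v) + Rabs (snd u - snd v).

Definition glued (X : sqraw) (z w : Mpt * car X) : Prop :=
  exists p q, M0 p /\ M0 q /\ snd z = sqS X p /\ snd w = sqS X q /\
    glob (fst z) p = glob (fst w) q.

Lemma M0_unit p : M0 p -> 0 <= fst p <= 1 /\ 0 <= snd p <= 1.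
Proof. intros (H1 & H2 & _). split; assumption. Qed.

Lemma glob_unit m p : M0 p -> 0 <= fst (glob m p) <= 1 /\ 0 <= snd (glob m p) <= 1.
Proof. intros Hp%M0_unit. destruct m; simpl; lra. Qed.

Lemma l1_triangle u v w : l1 u w <= l1 u v + l1 v w.
Proof. unfold l1. Rabs_lra. Qed.

Lemma l1_glob_le2 m n p q : M0 p -> M0 q -> l1 (glob m p) (glob n q) <= 2.
Proof. intros Hp%(glob_unit m) Hq%(glob_unit n). unfold l1. Rabs_lra. Qed.

Lemma l1_glob_cell X (HX : is_squams X) m p q : M0 p -> M0 q ->
  l1 (glob m p) (glob m q) <= dist X (sqS X p) (sqS X q) / 3.
Proof. intros Hp Hq. pose proof (dist_sqS_ge X HX p q Hp Hq). unfold l1, glob; simpl. Rabs_lra. Qed.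

Lemma teq_glued X (HX : is_squams X) z w : teq X z w -> z = w \/ glued X z w.
Proof.
  induction 1 as [z w H|z|z w _ IH|z w y _ IH1 _ IH2].
  - right. destruct H as (p & q & Hp & Hq & Ez & Ew & _ & Ex & Ey).
    exists p, q. unfold glob. rewrite Ex, Ey. tauto.
  - now left.
  - destruct IH as [<-|(p & q & Hp & Hq & Ez & Ew & E)]; [now left|].
    right. exists q, p. auto.
  - destruct IH1 as [<-|(p & q & Hp & Hq & Ez & Ew & E)]; [exact IH2|].
    destruct IH2 as [<-|(p' & q' & Hp' & Hq' & Ew' & Ey & E')].
    + right. exists p, q. auto.
    + right. rewrite Ew' in Ew. apply (sqS_inj X HX) in Ew as <-; auto.
      exists p, q'. rewrite E. auto.
Qed.

Lemma gen_glob X m n p q : adjacent m n -> M0 p -> M0 q -> glob m p = glob n q ->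
  gen X (m, sqS X p) (n, sqS X q).
Proof.
  intros Hmn Hp Hq E. injection E as Ex Ey. exists p, q. simpl. tauto.
Qed.

Ltac solve_M0 := unfold M0, in_unit; simpl; repeat split; try lra;
  first [left; lra | right; left; lra | right; right; left; lra | right; right; right; lra].

Ltac solve_adjacent := unfold adjacent, Rabs; simpl;
  first [left; split; [destruct (Rcase_abs _); lra | lra]
        |right; split; [lra | destruct (Rcase_abs _); lra]].

Ltac solve_gen :=
  apply gen_glob; [solve_adjacent | solve_M0 | solve_M0 | unfold glob; simpl; f_equal; lra].

(* Two distinct cells sharing a point are adjacent, or diagonal neighbours sharing a corner;
   in the latter case one of the two cells adjacent to both is not the hole (1,1). *)
Ltac solve_glued_teq X p1 p2 q1 q2 :=
  first
  [ lra
  | assert (p1 = q1) as <- by lra; assert (p2 = q2) as <- by lra; apply rst_refl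
  | apply rst_step; solve_gen
  | let via k r := apply (rst_trans _ _ _ (k, sqS X r)); apply rst_step; solve_gen in
    first [ via m00 (p1, q2) | via m00 (q1, p2) | via m02 (p1, q2) | via m02 (q1, p2)
          | via m20 (p1, q2) | via m20 (q1, p2) | via m22 (p1, q2) | via m22 (q1, p2) ] ].

Lemma glued_teq X m n p q : M0 p -> M0 q -> glob m p = glob n q ->
  teq X (m, sqS X p) (n, sqS X q).
Proof.
  destruct p as [p1 p2], q as [q1 q2]. intros Hp Hq E.
  pose proof (M0_unit _ Hp) as Hp'. pose proof (M0_unit _ Hq) as Hq'.
  injection E as Ex Ey. simpl in *.
  destruct m, n; simpl in Ex, Ey; solve_glued_teq X p1 p2 q1 q2.
Qed.

Section QuotientDistance.
Variable X : sqraw.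
Hypothesis HX : is_squams X.

Lemma tcls_surj (x : Tcar X) : exists z, x = tcls X z.
Proof. destruct x as [P [z E]]. subst P. now exists z. Qed.

Lemma tcls_eq z w : teq X z w -> tcls X z = tcls X w.
Proof.
  intros T. apply subset_eq_compat.
  apply functional_extensionality; intros y. apply propositional_extensionality.
  split; intros T'; eapply rst_trans; eauto; now apply rst_sym.
Qed.

Lemma trep_tcls z : teq X z (trep X (tcls X z)).
Proof. unfold trep. apply epsilon_spec. exists z. apply rst_refl. Qed.

Lemma chain_cost_teq_ends z z' w w' r :
  teq X z z' -> teq X w w' -> chain_cost X z' w' r -> chain_cost X z w r.
Proof.
  intros Tz Tw H. apply (ch_glue _ _ _ _ _ Tz).
  apply (chain_cost_eq _ _ _ _ _ (chain_cost_cat X _ _ _ _ _ H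
    (ch_glue _ _ _ _ _ (rst_sym _ _ _ _ Tw) (ch_nil _ w)))).
  lra.
Qed.

Lemma tdist_tcls_bounds z w r L : chain_cost X z w r ->
  (forall s, chain_cost X z w s -> L <= s) -> L <= tdist X (tcls X z) (tcls X w) <= r.
Proof.
  intros Hr HL. apply real_Glb_Rbar_bounds.
  - exists z, w. repeat split; auto; apply rst_refl.
  - intros s (z' & w' & Tz & Tw & Hs). exact (HL s (chain_cost_teq_ends _ _ _ _ _ Tz Tw Hs)).
Qed.

Lemma tdist_tcls_le z w r : chain_cost X z w r -> tdist X (tcls X z) (tcls X w) <= r.
Proof. intros H. apply (tdist_tcls_bounds _ _ _ 0 H), chain_cost_ge0, HX. Qed.

Lemma tdist_tcls_ge z w L : (forall s, chain_cost X z w s -> L <= s) ->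
  L <= tdist X (tcls X z) (tcls X w).
Proof. intros HL. apply (tdist_tcls_bounds _ _ _ _ (ch_dist _ _ _ _ _ (ch_nil _ w)) HL). Qed.

Lemma tdist_ge0 x y : 0 <= tdist X x y.
Proof.
  destruct (tcls_surj x) as [z ->], (tcls_surj y) as [w ->].
  apply tdist_tcls_ge. apply chain_cost_ge0, HX.
Qed.

Lemma tdist_le2 x y : tdist X x y <= 2.
Proof.
  destruct (tcls_surj x) as [z ->], (tcls_surj y) as [w ->].
  pose proof (tdist_tcls_le _ _ _ (ch_dist _ z w _ _ (ch_nil _ w))).
  pose proof (d0_le2 X HX z w). lra.
Qed.

Lemma tdist_0 x : tdist X x x = 0.
Proof.
  apply Rle_antisym; [|apply tdist_ge0].
  destruct (tcls_surj x) as [z ->]. apply tdist_tcls_le, ch_nil.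
Qed.

Lemma tdist_comm x y : tdist X x y = tdist X y x.
Proof.
  assert (Hle : forall x y, tdist X y x <= tdist X x y).
  { clear x y. intros x y. destruct (tcls_surj x) as [z ->], (tcls_surj y) as [w ->].
    apply tdist_tcls_ge. intros s Hs. now apply tdist_tcls_le, chain_cost_rev. }
  apply Rle_antisym; apply Hle.
Qed.

Lemma tdist_triangle x y z : tdist X x z <= tdist X x y + tdist X y z.
Proof.
  destruct (tcls_surj x) as [u ->], (tcls_surj y) as [v ->], (tcls_surj z) as [w ->].
  assert (H : tdist X (tcls X u) (tcls X w) - tdist X (tcls X u) (tcls X v)
              <= tdist X (tcls X v) (tcls X w)).
  { apply tdist_tcls_ge. intros s2 Hs2.
    enough (tdist X (tcls X u) (tcls X w) - s2 <= tdist X (tcls X u) (tcls X v)) by lra.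
    apply tdist_tcls_ge. intros s1 Hs1.
    pose proof (tdist_tcls_le _ _ _ (chain_cost_cat X _ _ _ _ _ Hs1 Hs2)). lra. }
  lra.
Qed.

Lemma tdist_cell m u v : tdist X (tcls X (m, u)) (tcls X (m, v)) <= dist X u v / 3.
Proof.
  eapply Rle_trans; [apply tdist_tcls_le, ch_dist, ch_nil|].
  unfold d0; simpl. destruct (Mpt_eq_dec m m); [lra|congruence].
Qed.

End QuotientDistance.

Lemma Lipschitz_unit_min_pos (f : R -> R) :
  (forall t t', 0 <= t <= 1 -> 0 <= t' <= 1 -> Rabs (f t - f t') <= Rabs (t - t')) ->
  (forall t, 0 <= t <= 1 -> 0 < f t) ->
  exists delta, 0 < delta /\ forall t, 0 <= t <= 1 -> delta <= f t.
Proof.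
  intros Hf Hpos.
  set (clamp t := Rmax 0 (Rmin 1 t)).
  assert (Hclamp : forall t, 0 <= clamp t <= 1) by (intros; unfold clamp; minmax_lra).
  assert (Hclamp_id : forall t, 0 <= t <= 1 -> clamp t = t) by (intros; unfold clamp; minmax_lra).
  assert (Hcont : forall t, continuity_pt (fun t => f (clamp t)) t).
  { intros t eps Heps. exists eps. split; [lra|]. intros t' [_ Ht']. simpl in *.
    unfold R_dist in *. eapply Rle_lt_trans; [apply Hf; apply Hclamp|].
    eapply Rle_lt_trans; [|exact Ht']. unfold clamp, Rmax, Rmin.
    repeat destruct (Rle_dec _ _); Rabs_lra. }
  destruct (Rtopology.continuity_ab_min (fun t => f (clamp t)) 0 1) as [tm [Hmin Htm]];
    [lra | intros; apply Hcont |].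
  exists (f tm). split; [now apply Hpos|].
  intros t Ht. specialize (Hmin t Ht). simpl in Hmin. now rewrite !Hclamp_id in Hmin.
Qed.

Section LowerBounds.
Variable X : sqraw.
Hypothesis HX : is_squams X.

(* The slack [dist (snd z) (S p) / 3] lets the induction cross a glued pair, where the boundary
   point representing the start of the chain changes. *)
Lemma chain_cost_l1_ge z y r : chain_cost X z y r ->
  forall n q, M0 q -> y = (n, sqS X q) ->
  forall p, M0 p -> l1 (glob (fst z) p) (glob n q) <= r + dist X (snd z) (sqS X p) / 3.
Proof.
  induction 1 as [z|z w y r Hr IH|z w y r T _ IH]; intros n q Hq -> p Hp.
  - simpl. rewrite dist_comm, Rplus_0_l by auto. now apply l1_glob_cell.
  - specialize (IH n q Hq eq_refl). unfold d0.
    destruct (Mpt_eq_dec (fst z) (fst w)) as [->|_].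
    + pose proof (IH p Hp). pose proof (dist_triangle X HX (snd w) (snd z) (sqS X p)).
      rewrite (dist_comm X HX (snd w) (snd z)) in *. lra.
    + pose proof (chain_cost_ge0 X HX _ _ _ Hr). pose proof (dist_ge0 X HX (snd z) (sqS X p)).
      pose proof (l1_glob_le2 (fst z) n p q Hp Hq). lra.
  - destruct (teq_glued X HX _ _ T) as [<-|(p0 & p0' & Hp0 & Hp0' & Ez & Ew & E)]; [auto|].
    specialize (IH n q Hq eq_refl p0' Hp0'). rewrite Ew, dist_0, <- E in IH by auto.
    pose proof (l1_triangle (glob (fst z) p) (glob (fst z) p0) (glob n q)).
    pose proof (l1_glob_cell X HX (fst z) p p0 Hp Hp0).
    rewrite Ez, dist_comm by auto. lra.
Qed.

Lemma tdist_glob_ge m p n q : M0 p -> M0 q ->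
  l1 (glob m p) (glob n q) <= tdist X (tcls X (m, sqS X p)) (tcls X (n, sqS X q)).
Proof.
  intros Hp Hq. apply tdist_tcls_ge; auto. intros s Hs.
  pose proof (chain_cost_l1_ge _ _ _ Hs n q Hq eq_refl p Hp) as H.
  simpl in H. rewrite dist_0 in H by auto. lra.
Qed.

Lemma tdist_Lipschitz_ge (phi : Mpt * car X -> R) :
  (forall z w, gen X z w -> phi z = phi w) -> (forall z w, phi w - phi z <= d0 X z w) ->
  forall z w, phi w - phi z <= tdist X (tcls X z) (tcls X w).
Proof.
  intros Hgen Hd0 z w. apply tdist_tcls_ge; auto.
  assert (Hteq : forall z w, teq X z w -> phi z = phi w) by (induction 1; auto; congruence).
  induction 1 as [z|z w y r _ IH|z w y r T _ IH].
  - lra.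
  - pose proof (Hd0 z w). lra.
  - rewrite (Hteq _ _ T). exact IH.
Qed.

Lemma tdist_off_boundary_pos m x0 delta : 0 < delta ->
  (forall p, M0 p -> delta <= dist X x0 (sqS X p)) ->
  forall n y0, (n, y0) <> (m, x0) -> 0 < tdist X (tcls X (m, x0)) (tcls X (n, y0)).
Proof.
  intros Hdelta Hbd n y0 Hne.
  assert (Hdelta2 : delta <= 2).
  { assert (H00 : M0 (0, 0)) by (unfold M0, in_unit; simpl; lra).
    pose proof (Hbd _ H00). pose proof (dist_le2 X HX x0 (sqS X (0, 0))). lra. }
  (* [phi] is the distance to [m (x) x0], capped at [delta/3]: it is constant on the glued
     boundary points, which all lie at distance at least [delta/3]. *)
  set (phi z := if Mpt_eq_dec (fst z) m then Rmin (dist X x0 (snd z)) delta / 3 else delta / 3).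
  assert (Hgen : forall z w, gen X z w -> phi z = phi w).
  { intros z w (p & q & Hp & Hq & Ez & Ew & _). unfold phi. rewrite Ez, Ew.
    pose proof (Hbd _ Hp). pose proof (Hbd _ Hq).
    destruct (Mpt_eq_dec (fst z) m), (Mpt_eq_dec (fst w) m); minmax_lra. }
  assert (Hd0 : forall z w, phi w - phi z <= d0 X z w).
  { intros z w. unfold phi, d0.
    pose proof (dist_triangle X HX x0 (snd z) (snd w)).
    pose proof (dist_ge0 X HX x0 (snd z)). pose proof (dist_ge0 X HX x0 (snd w)).
    pose proof (dist_ge0 X HX (snd z) (snd w)).
    destruct (Mpt_eq_dec (fst z) (fst w)) as [->|];
      destruct (Mpt_eq_dec (fst w) m), (Mpt_eq_dec (fst z) m); minmax_lra. }
  pose proof (tdist_Lipschitz_ge phi Hgen Hd0 (m, x0) (n, y0)) as H.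
  unfold phi in H; simpl in H. rewrite dist_0 in H by auto.
  destruct (Mpt_eq_dec m m) as [_|]; [|congruence].
  destruct (Mpt_eq_dec n m) as [->|]; [|minmax_lra].
  assert (dist X x0 y0 <> 0) by (intros E%(dist_eq0 X HX); congruence).
  pose proof (dist_ge0 X HX x0 y0). minmax_lra.
Qed.

Lemma sqS_edge_dist_pos x0 (e : R -> R * R) : (forall p, M0 p -> x0 <> sqS X p) ->
  (forall t, 0 <= t <= 1 -> M0 (e t)) ->
  (forall t t', 0 <= t <= 1 -> 0 <= t' <= 1 ->
     dist X (sqS X (e t)) (sqS X (e t')) = Rabs (t - t')) ->
  exists delta, 0 < delta /\ forall t, 0 <= t <= 1 -> delta <= dist X x0 (sqS X (e t)).
Proof.
  intros Hoff He Hiso. apply Lipschitz_unit_min_pos.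
  - intros t t' Ht Ht'. rewrite <- (Hiso t t') by auto.
    pose proof (dist_triangle X HX x0 (sqS X (e t')) (sqS X (e t))).
    pose proof (dist_triangle X HX x0 (sqS X (e t)) (sqS X (e t'))).
    rewrite (dist_comm X HX (sqS X (e t'))) in *. Rabs_lra.
  - intros t Ht. pose proof (dist_ge0 X HX x0 (sqS X (e t))).
    assert (dist X x0 (sqS X (e t)) <> 0) by (intros E%(dist_eq0 X HX); exact (Hoff _ (He t Ht) E)).
    lra.
Qed.

(* The image of the boundary square is compact, being a union of four isometric copies of [0,1]. *)
Lemma sqS_dist_pos x0 : (forall p, M0 p -> x0 <> sqS X p) ->
  exists delta, 0 < delta /\ forall p, M0 p -> delta <= dist X x0 (sqS X p).
Proof.
  intros Hoff.
  assert (Hvert : forall i, i = 0 \/ i = 1 -> exists delta, 0 < delta /\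
            forall t, 0 <= t <= 1 -> delta <= dist X x0 (sqS X (i, t))).
  { intros i Hi. apply (sqS_edge_dist_pos x0 (fun t => (i, t)) Hoff).
    - intros t Ht. unfold M0, in_unit; simpl. lra.
    - intros t t' Ht Ht'. rewrite Rabs_minus_sym.
      apply dist_sqS_vert; auto; unfold in_unit; lra. }
  assert (Hhor : forall i, i = 0 \/ i = 1 -> exists delta, 0 < delta /\
            forall t, 0 <= t <= 1 -> delta <= dist X x0 (sqS X (t, i))).
  { intros i Hi. apply (sqS_edge_dist_pos x0 (fun t => (t, i)) Hoff).
    - intros t Ht. unfold M0, in_unit; simpl. lra.
    - intros t t' Ht Ht'. rewrite Rabs_minus_sym.
      apply dist_sqS_hor; auto; unfold in_unit; lra. }
  destruct (Hvert 0) as [d1 [P1 Q1]]; [lra|]. destruct (Hvert 1) as [d2 [P2 Q2]]; [lra|].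
  destruct (Hhor 0) as [d3 [P3 Q3]]; [lra|]. destruct (Hhor 1) as [d4 [P4 Q4]]; [lra|].
  exists (Rmin (Rmin d1 d2) (Rmin d3 d4)). split; [minmax_lra|].
  intros [p1 p2] (Hp1 & Hp2 & Hbd). unfold in_unit in *; simpl in *.
  destruct Hbd as [-> | [-> | [-> | ->]]];
    [pose proof (Q1 p2 Hp2) | pose proof (Q2 p2 Hp2)
    |pose proof (Q3 p1 Hp1) | pose proof (Q4 p1 Hp1)];
    minmax_lra.
Qed.

Lemma tdist_eq0 x y : tdist X x y = 0 -> x = y.
Proof.
  destruct (tcls_surj X x) as [[m x0] ->], (tcls_surj X y) as [[n y0] ->]. intros H0.
  destruct (classic ((n, y0) = (m, x0))) as [->|Hne]; [reflexivity|].
  destruct (classic (exists p, M0 p /\ x0 = sqS X p)) as [[p [Hp ->]]|Hx].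
  - destruct (classic (exists q, M0 q /\ y0 = sqS X q)) as [[q [Hq ->]]|Hy].
    + apply tcls_eq, glued_teq; auto. pose proof (tdist_glob_ge m p n q Hp Hq) as H.
      rewrite H0 in H. unfold l1 in H.
      destruct (glob m p), (glob n q); simpl in *. f_equal; Rabs_lra.
    + destruct (sqS_dist_pos y0) as (delta & Hdelta & Hbd); [eauto|].
      pose proof (tdist_off_boundary_pos n y0 delta Hdelta Hbd m (sqS X p)
                    ltac:(congruence)) as H.
      rewrite tdist_comm, H0 in H by auto. lra.
  - destruct (sqS_dist_pos x0) as (delta & Hdelta & Hbd); [eauto|].
    pose proof (tdist_off_boundary_pos m x0 delta Hdelta Hbd n y0 Hne). lra.
Qed.

End LowerBounds.

Definition loc (m : Mpt) (p : R * R) : R * R := (3 * fst p - mx m, 3 * snd p - my m).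

Lemma glob_loc m p : glob m (loc m p) = p.
Proof. destruct p. unfold glob, loc; simpl. f_equal; lra. Qed.

Lemma cell_pick_cell p : M0 p -> cell (pick_cell p) p.
Proof.
  intros Hp. unfold pick_cell. apply epsilon_spec.
  destruct p as [p1 p2]. unfold M0, in_unit, cell in *; simpl in *.
  destruct (Rle_dec (3 * p1) 1), (Rle_dec (3 * p1) 2), (Rle_dec (3 * p2) 1), (Rle_dec (3 * p2) 2);
    first [ exists m00; simpl; lra | exists m01; simpl; lra | exists m02; simpl; lra
          | exists m10; simpl; lra | exists m12; simpl; lra | exists m20; simpl; lra
          | exists m21; simpl; lra | exists m22; simpl; lra | exfalso; lra ].
Qed.

Lemma loc_M0 m p : M0 p -> cell m p -> M0 (loc m p).
Proof.
  destruct p as [p1 p2]. unfold M0, in_unit, cell, loc; simpl.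
  intros (H1 & H2 & H3) (C1 & C2).
  destruct m; simpl in *; repeat split; try lra; destruct H3 as [-> | [-> | [-> | ->]]]; lra.
Qed.

Lemma cell_column i j : i = 0 \/ i = 1 -> j = 0 \/ j = 1 \/ j = 2 ->
  exists n, mx n = 2 * i /\ my n = j.
Proof.
  intros [-> | ->] [-> | [-> | ->]];
    [exists m00 | exists m01 | exists m02 | exists m20 | exists m21 | exists m22]; simpl; lra.
Qed.

Lemma cell_row i j : i = 0 \/ i = 1 -> j = 0 \/ j = 1 \/ j = 2 ->
  exists n, mx n = j /\ my n = 2 * i.
Proof.
  intros [-> | ->] [-> | [-> | ->]];
    [exists m00 | exists m10 | exists m20 | exists m02 | exists m12 | exists m22]; simpl; lra.
Qed.

Lemma Lipschitz_glue (F : R -> R -> R) a b c : a <= b <= c ->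
  (forall x y z, a <= x <= c -> a <= y <= c -> a <= z <= c -> F x z <= F x y + F y z) ->
  (forall r s, a <= r <= b -> a <= s <= b -> F r s <= Rabs (s - r)) ->
  (forall r s, b <= r <= c -> b <= s <= c -> F r s <= Rabs (s - r)) ->
  forall r s, a <= r <= c -> a <= s <= c -> F r s <= Rabs (s - r).
Proof.
  intros Habc Htri Hab Hbc r s Hr Hs.
  destruct (Rle_dec r b), (Rle_dec s b).
  - apply Hab; lra.
  - pose proof (Htri r b s Hr ltac:(lra) Hs).
    pose proof (Hab r b ltac:(lra) ltac:(lra)). pose proof (Hbc b s ltac:(lra) ltac:(lra)).
    Rabs_lra.
  - pose proof (Htri r b s Hr ltac:(lra) Hs).
    pose proof (Hbc r b ltac:(lra) ltac:(lra)). pose proof (Hab b s ltac:(lra) ltac:(lra)).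
    Rabs_lra.
  - apply Hbc; lra.
Qed.

Lemma Lipschitz_thirds (F : R -> R -> R) :
  (forall x y z, 0 <= x <= 1 -> 0 <= y <= 1 -> 0 <= z <= 1 -> F x z <= F x y + F y z) ->
  (forall j r s, j = 0 \/ j = 1 \/ j = 2 -> j <= 3 * r <= j + 1 -> j <= 3 * s <= j + 1 ->
     F r s <= Rabs (s - r)) ->
  forall r s, 0 <= r <= 1 -> 0 <= s <= 1 -> F r s <= Rabs (s - r).
Proof.
  intros Htri Hloc. apply (Lipschitz_glue F 0 (2/3) 1); [lra | exact Htri | |].
  - apply (Lipschitz_glue F 0 (1/3) (2/3)); [lra | intros; apply Htri; lra | |];
      intros r s Hr Hs; [apply (Hloc 0) | apply (Hloc 1)]; lra.
  - intros r s Hr Hs. apply (Hloc 2); lra.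
Qed.

Section BoundarySquare.
Variable X : sqraw.
Hypothesis HX : is_squams X.

Lemma tS_cell p m : M0 p -> cell m p -> tS X p = tcls X (m, sqS X (loc m p)).
Proof.
  intros Hp Hm. apply tcls_eq, glued_teq.
  - now apply loc_M0, cell_pick_cell.
  - now apply loc_M0.
  - exact (eq_trans (glob_loc _ p) (eq_sym (glob_loc m p))).
Qed.

Lemma tS_l1_le p q : M0 p -> M0 q -> l1 p q <= tdist X (tS X p) (tS X q).
Proof.
  intros Hp Hq.
  rewrite (tS_cell p _ Hp (cell_pick_cell p Hp)), (tS_cell q _ Hq (cell_pick_cell q Hq)).
  rewrite <- (glob_loc (pick_cell p) p) at 1. rewrite <- (glob_loc (pick_cell q) q) at 1.
  apply tdist_glob_ge; auto; now apply loc_M0, cell_pick_cell.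
Qed.

Lemma tS_cell_le m p q : M0 p -> M0 q -> cell m p -> cell m q ->
  tdist X (tS X p) (tS X q) <= dist X (sqS X (loc m p)) (sqS X (loc m q)) / 3.
Proof. intros. rewrite (tS_cell p m), (tS_cell q m); auto. now apply tdist_cell. Qed.

Lemma tS_vert_le i r s : i = 0 \/ i = 1 -> in_unit r -> in_unit s ->
  tdist X (tS X (i, r)) (tS X (i, s)) <= Rabs (s - r).
Proof.
  intros Hi Hr Hs. apply (Lipschitz_thirds (fun r s => tdist X (tS X (i, r)) (tS X (i, s)))); auto.
  - intros; apply tdist_triangle; auto.
  - intros j r' s' Hj Hr' Hs'. destruct (cell_column i j Hi Hj) as (n & Ex & Ey).
    assert (Hloc : forall t, loc n (i, t) = (i, 3 * t - j)).
    { intros t. unfold loc; simpl. rewrite Ex, Ey. f_equal; lra. }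
    eapply Rle_trans; [apply (tS_cell_le n)|]; unfold M0, in_unit, cell in *; simpl; try lra.
    rewrite !Hloc, dist_sqS_vert by (auto; unfold in_unit; lra). Rabs_lra.
Qed.

Lemma tS_hor_le i r s : i = 0 \/ i = 1 -> in_unit r -> in_unit s ->
  tdist X (tS X (r, i)) (tS X (s, i)) <= Rabs (s - r).
Proof.
  intros Hi Hr Hs. apply (Lipschitz_thirds (fun r s => tdist X (tS X (r, i)) (tS X (s, i)))); auto.
  - intros; apply tdist_triangle; auto.
  - intros j r' s' Hj Hr' Hs'. destruct (cell_row i j Hi Hj) as (n & Ex & Ey).
    assert (Hloc : forall t, loc n (t, i) = (3 * t - j, i)).
    { intros t. unfold loc; simpl. rewrite Ex, Ey. f_equal; lra. }
    eapply Rle_trans; [apply (tS_cell_le n)|]; unfold M0, in_unit, cell in *; simpl; try lra.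
    rewrite !Hloc, dist_sqS_hor by (auto; unfold in_unit; lra). Rabs_lra.
Qed.

End BoundarySquare.

Lemma Mtens_squams X : is_squams X -> is_squams (Mtens X).
Proof.
  intros HX.
  assert (Hedge : forall i r, i = 0 \/ i = 1 -> in_unit r -> M0 (i, r) /\ M0 (r, i))
    by (unfold M0, in_unit; simpl; intros; lra).
  split; [|split; [|split; [|split]]]; simpl.
  - split; [|split].
    + split; [apply tdist_eq0 | intros ->; apply tdist_0]; auto.
    + now apply tdist_comm.
    + now apply tdist_triangle.
  - now apply tdist_le2.
  - intros p q Hp Hq E. pose proof (tS_l1_le X HX p q Hp Hq) as H.
    rewrite E, tdist_0 in H by auto. destruct p, q; unfold l1 in H; simpl in *. f_equal; Rabs_lra.
  - intros i r s Hi Hr Hs. destruct (Hedge i r Hi Hr) as [Hir Hri], (Hedge i s Hi Hs) as [His Hsi].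
    pose proof (tS_l1_le X HX _ _ Hir His). pose proof (tS_l1_le X HX _ _ Hri Hsi).
    pose proof (tS_vert_le X HX i r s Hi Hr Hs). pose proof (tS_hor_le X HX i r s Hi Hr Hs).
    unfold l1 in *; simpl in *. split; Rabs_lra.
  - intros p q Hp Hq. apply Rle_ge, tS_l1_le; auto.
Qed.

Section Functoriality.
Variables X Y : sqraw.
Variable f : car X -> car Y.
Hypothesis HY : is_squams Y.
Hypothesis Hf : is_mor X Y f.

Lemma teq_map z w : teq X z w -> teq Y (fst z, f (snd z)) (fst w, f (snd w)).
Proof.
  induction 1 as [z w H|z|z w _ IH|z w y _ IH1 _ IH2].
  - apply rst_step. destruct H as (p & q & Hp & Hq & Ez & Ew & Hadj & Ex & Ey).
    exists p, q. simpl. rewrite Ez, Ew, !(proj2 Hf) by auto. tauto.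
  - apply rst_refl.
  - now apply rst_sym.
  - eapply rst_trans; eauto.
Qed.

Lemma Mtens_map_tcls m x : Mtens_map X Y f (tcls X (m, x)) = tcls Y (m, f x).
Proof.
  unfold Mtens_map. apply tcls_eq, rst_sym.
  exact (teq_map _ _ (trep_tcls X (m, x))).
Qed.

Lemma chain_cost_map z w r : chain_cost X z w r ->
  exists r', r' <= r /\ chain_cost Y (fst z, f (snd z)) (fst w, f (snd w)) r'.
Proof.
  induction 1 as [z|z w y r _ (r' & Hr' & H)|z w y r T _ (r' & Hr' & H)].
  - exists 0. split; [lra | apply ch_nil].
  - exists (d0 Y (fst z, f (snd z)) (fst w, f (snd w)) + r'). split; [|now apply ch_dist].
    unfold d0; simpl. destruct (Mpt_eq_dec (fst z) (fst w)); [|lra].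
    pose proof (proj1 Hf (snd z) (snd w)). lra.
  - exists r'. split; [exact Hr'|]. exact (ch_glue _ _ _ _ _ (teq_map _ _ T) H).
Qed.

Lemma Mtens_map_mor : is_mor (Mtens X) (Mtens Y) (Mtens_map X Y f).
Proof.
  split; simpl.
  - intros x y. destruct (tcls_surj X x) as [[m u] ->], (tcls_surj X y) as [[n v] ->].
    rewrite !Mtens_map_tcls. apply tdist_tcls_ge. intros s Hs.
    destruct (chain_cost_map _ _ _ Hs) as (r' & Hr' & H).
    pose proof (tdist_tcls_le Y HY _ _ _ H). simpl in *. lra.
  - intros p Hp. change (tS X p) with (tcls X (pick_cell p, sqS X (loc (pick_cell p) p))).
    rewrite Mtens_map_tcls, (proj2 Hf) by now apply loc_M0, cell_pick_cell.
    reflexivity.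
Qed.

End Functoriality.

(* [(car Y, 3 d_Y, s0)] itself is not a square metric space ([s0] need not be injective nor satisfy
   (sq2)); pairing it with [C] repairs this, and the truncation at 2 keeps distances bounded. *)
Definition pair_space (Y C : sqraw) (s0 : R * R -> car Y) : sqraw :=
  SqRaw (car Y * car C)%type
    (fun u v => Rmax (Rmin (3 * dist Y (fst u) (fst v)) 2) (dist C (snd u) (snd v)))
    (fun p => (s0 p, sqS C p)).

Lemma pair_space_squams Y C s0 : is_squams Y -> is_squams C ->
  (forall i r s, i = 0 \/ i = 1 -> in_unit r -> in_unit s ->
     3 * dist Y (s0 (i, r)) (s0 (i, s)) <= Rabs (s - r) /\
     3 * dist Y (s0 (r, i)) (s0 (s, i)) <= Rabs (s - r)) ->
  is_squams (pair_space Y C s0).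
Proof.
  intros HY HC Hs0. split; [|split; [|split; [|split]]]; simpl.
  - split; [|split].
    + intros [y1 c1] [y2 c2]; simpl. split.
      * intros H. pose proof (dist_ge0 Y HY y1 y2). pose proof (dist_ge0 C HC c1 c2).
        assert (dist Y y1 y2 = 0 /\ dist C c1 c2 = 0) as [E1%(dist_eq0 Y HY) E2%(dist_eq0 C HC)]
          by minmax_lra.
        now subst.
      * intros [= <- <-]. rewrite !dist_0 by auto. minmax_lra.
    + intros [y1 c1] [y2 c2]; simpl. now rewrite (dist_comm Y HY y1), (dist_comm C HC c1).
    + intros [y1 c1] [y2 c2] [y3 c3]; simpl.
      pose proof (dist_triangle Y HY y1 y2 y3). pose proof (dist_triangle C HC c1 c2 c3).
      pose proof (dist_ge0 Y HY y1 y2). pose proof (dist_ge0 Y HY y2 y3).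
      pose proof (dist_ge0 C HC c1 c2). pose proof (dist_ge0 C HC c2 c3).
      minmax_lra.
  - intros [y1 c1] [y2 c2]; simpl. pose proof (dist_le2 C HC c1 c2). minmax_lra.
  - intros p q Hp Hq [= _ E]. now apply (sqS_inj C HC).
  - intros i r s Hi Hr Hs. destruct (Hs0 i r s Hi Hr Hs) as [H1 H2].
    rewrite (dist_sqS_vert C HC), (dist_sqS_hor C HC) by auto.
    pose proof (dist_ge0 Y HY (s0 (i, r)) (s0 (i, s))).
    pose proof (dist_ge0 Y HY (s0 (r, i)) (s0 (s, i))). pose proof (Rabs_pos (s - r)).
    split; minmax_lra.
  - intros p q Hp Hq. pose proof (dist_sqS_ge C HC p q Hp Hq). apply Rle_ge. minmax_lra.
Qed.

Section Colimit.
Variable A : nat -> sqraw.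
Variable a : forall k, car (A k) -> car (A (S k)).
Variable C : sqraw.
Variable c : forall k, car (A k) -> car C.
Hypothesis HA : forall k, is_squams (A k).
Hypothesis Ha : forall k, is_mor (A k) (A (S k)) (a k).
Hypothesis Hco : is_colimit A a C c.

Let HC : is_squams C := proj1 Hco.
Let Hc : forall k, is_mor (A k) C (c k) := proj1 (proj2 Hco).
Let Hca : forall k x, c (S k) (a k x) = c k x := proj1 (proj2 (proj2 Hco)).

Definition cocone_image : Type := {y : car C | exists k x, y = c k x}.

Definition cocone_image_in k (x : car (A k)) : cocone_image :=
  exist _ (c k x) (ex_intro _ k (ex_intro _ x eq_refl)).

Definition cocone_image_space : sqraw :=
  SqRaw cocone_image (fun u v => dist C (proj1_sig u) (proj1_sig v))
    (fun p => cocone_image_in 0 (sqS (A 0) p)).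

Lemma cocone_image_space_squams : is_squams cocone_image_space.
Proof.
  assert (HcS : forall p, M0 p -> c 0 (sqS (A 0) p) = sqS C p) by apply Hc.
  split; [|split; [|split; [|split]]]; simpl.
  - split; [|split].
    + intros u v. split.
      * intros E%(dist_eq0 C HC). destruct u, v; simpl in E; subst.
        f_equal. apply proof_irrelevance.
      * intros ->. now apply dist_0.
    + intros; now apply dist_comm.
    + intros; now apply dist_triangle.
  - intros; now apply dist_le2.
  - intros p q Hp Hq E%(f_equal (@proj1_sig _ _)). simpl in E.
    rewrite !HcS in E by auto. now apply (sqS_inj C HC).
  - intros i r s Hi Hr Hs. rewrite !HcS by (unfold M0, in_unit in *; simpl; lra).
    split; [apply dist_sqS_vert | apply dist_sqS_hor]; auto.
  - intros p q Hp Hq. rewrite !HcS by auto. apply Rle_ge, dist_sqS_ge; auto.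
Qed.

(* The cocone factors through its image; by uniqueness the factorisation composed with the
   inclusion is the identity of [C]. *)
Lemma colimit_jointly_surjective y : exists k x, y = c k x.
Proof.
  pose proof Hco as (_ & _ & _ & Huniv).
  destruct (Huniv cocone_image_space cocone_image_in cocone_image_space_squams)
    as (u & ((Hu_short & Hu_S) & Hu_c) & _).
  - intros k. split; [intros x x'; apply Hc|].
    intros p Hp. apply subset_eq_compat. simpl. now rewrite !(proj2 (Hc _)).
  - intros k x. apply subset_eq_compat. apply Hca.
  - destruct (Huniv C c HC Hc Hca) as (id & _ & Hid).
    assert (Eid : id = fun y => y) by (apply Hid; repeat split; auto using Rle_refl).
    assert (Eu : id = fun y => proj1_sig (u y)).
    { apply Hid. repeat split.
      - intros y1 y2. apply Hu_short.
      - intros p Hp. simpl. rewrite Hu_S by auto. simpl. now apply Hc.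
      - intros k x. now rewrite Hu_c. }
    rewrite Eid in Eu. apply (f_equal (fun h => h y)) in Eu.
    destruct (u y) as [y' Hy']. simpl in Eu. now subst.
Qed.

Lemma cocone_lift k l : (k <= l)%nat -> forall x : car (A k), exists x', c l x' = c k x.
Proof.
  induction 1 as [|l _ IH]; intros x; [now exists x|].
  destruct (IH x) as [x' Hx']. exists (a l x'). now rewrite Hca.
Qed.

Lemma colimit_common_stage y y' : exists l x x', y = c l x /\ y' = c l x'.
Proof.
  destruct (colimit_jointly_surjective y) as (k & x & ->).
  destruct (colimit_jointly_surjective y') as (k' & x' & ->).
  destruct (cocone_lift k (Nat.max k k') (Nat.le_max_l _ _) x) as [z Hz].
  destruct (cocone_lift k' (Nat.max k k') (Nat.le_max_r _ _) x') as [z' Hz'].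
  now exists (Nat.max k k'), z, z'.
Qed.

Section UniversalProperty.
Variable Y : sqraw.
Variable g : forall k, Tcar (A k) -> car Y.
Hypothesis HY : is_squams Y.
Hypothesis Hg : forall k, is_mor (Mtens (A k)) Y (g k).
Hypothesis Hga : forall k x, g (S k) (Mtens_map (A k) (A (S k)) (a k) x) = g k x.

Lemma g_tcls_succ m k x : g (S k) (tcls (A (S k)) (m, a k x)) = g k (tcls (A k) (m, x)).
Proof. now rewrite <- (Hga k (tcls (A k) (m, x))), Mtens_map_tcls. Qed.

Lemma g_tcls_sqS m p k : M0 p ->
  g k (tcls (A k) (m, sqS (A k) p)) = g 0 (tcls (A 0) (m, sqS (A 0) p)).
Proof.
  intros Hp. induction k as [|k IH]; [reflexivity|].
  rewrite <- (proj2 (Ha k)), g_tcls_succ by auto. exact IH.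
Qed.

Lemma g_tcls_Lipschitz k m x x' :
  3 * dist Y (g k (tcls (A k) (m, x))) (g k (tcls (A k) (m, x'))) <= dist (A k) x x'.
Proof.
  pose proof (proj1 (Hg k) (tcls (A k) (m, x)) (tcls (A k) (m, x'))).
  pose proof (tdist_cell (A k) (HA k) m x x'). simpl in *. lra.
Qed.

Lemma cell_factor m : exists F : car C -> car Y,
  (forall k x, F (c k x) = g k (tcls (A k) (m, x))) /\
  (forall p, M0 p -> F (sqS C p) = g 0 (tcls (A 0) (m, sqS (A 0) p))) /\
  (forall y y', 3 * dist Y (F y) (F y') <= dist C y y').
Proof.
  pose proof Hco as (_ & _ & _ & Huniv).
  set (s0 p := g 0 (tcls (A 0) (m, sqS (A 0) p))).
  assert (HW : is_squams (pair_space Y C s0)).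
  { apply pair_space_squams; auto. intros i r s Hi Hr Hs. unfold s0.
    rewrite <- (dist_sqS_vert (A 0) (HA 0) i r s Hi Hr Hs) at 1.
    rewrite <- (dist_sqS_hor (A 0) (HA 0) i r s Hi Hr Hs).
    split; apply g_tcls_Lipschitz. }
  set (h k x := (g k (tcls (A k) (m, x)), c k x) : car (pair_space Y C s0)).
  destruct (Huniv _ h HW) as (u & ((Hu_short & Hu_S) & Hu_c) & _).
  - intros k. split; simpl.
    + intros x x'. pose proof (g_tcls_Lipschitz k m x x'). pose proof (proj1 (Hc k) x x').
      pose proof (dist_ge0 _ (HA k) x x'). minmax_lra.
    + intros p Hp. unfold h, s0. now rewrite g_tcls_sqS, (proj2 (Hc k)).
  - intros k x. unfold h. now rewrite g_tcls_succ, Hca.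
  - exists (fun y => fst (u y)). split; [|split].
    + intros k x. now rewrite Hu_c.
    + intros p Hp. now rewrite Hu_S.
    + (* On a common stage [3 d_Y <= d_(A l) <= 2], so the truncation at 2 is inactive. *)
      intros y y'. destruct (colimit_common_stage y y') as (l & x & x' & -> & ->).
      pose proof (Hu_short (c l x) (c l x')) as H. rewrite !Hu_c in *. unfold h in *; simpl in *.
      pose proof (g_tcls_Lipschitz l m x x'). pose proof (dist_le2 _ (HA l) x x').
      minmax_lra.
Qed.

Section Assembly.
Variable F : Mpt -> car C -> car Y.
Hypothesis HF_S : forall m p, M0 p -> F m (sqS C p) = g 0 (tcls (A 0) (m, sqS (A 0) p)).
Hypothesis HF_Lip : forall m y y', 3 * dist Y (F m y) (F m y') <= dist C y y'.

Lemma cellwise_teq z w : teq C z w -> F (fst z) (snd z) = F (fst w) (snd w).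
Proof.
  induction 1 as [z w H| | |]; try congruence.
  destruct H as (p & q & Hp & Hq & -> & -> & _ & Ex & Ey).
  rewrite !HF_S by auto. f_equal. apply tcls_eq, glued_teq; auto.
  unfold glob. now rewrite Ex, Ey.
Qed.

Lemma cellwise_chain_cost z w r : chain_cost C z w r ->
  dist Y (F (fst z) (snd z)) (F (fst w) (snd w)) <= r.
Proof.
  induction 1 as [z|z w y r _ IH|z w y r T _ IH].
  - rewrite dist_0 by auto. lra.
  - pose proof (dist_triangle Y HY (F (fst z) (snd z)) (F (fst w) (snd w)) (F (fst y) (snd y))).
    enough (dist Y (F (fst z) (snd z)) (F (fst w) (snd w)) <= d0 C z w) by lra.
    unfold d0. destruct (Mpt_eq_dec (fst z) (fst w)) as [->|].
    + pose proof (HF_Lip (fst w) (snd z) (snd w)). lra.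
    + now apply dist_le2.
  - now rewrite (cellwise_teq _ _ T).
Qed.

Definition cellwise (xi : Tcar C) : car Y := F (fst (trep C xi)) (snd (trep C xi)).

Lemma cellwise_tcls m y : cellwise (tcls C (m, y)) = F m y.
Proof. unfold cellwise. symmetry. exact (cellwise_teq _ _ (trep_tcls C (m, y))). Qed.

Lemma cellwise_mor : is_mor (Mtens C) Y cellwise.
Proof.
  split; simpl.
  - intros x y. destruct (tcls_surj C x) as [[m u] ->], (tcls_surj C y) as [[n v] ->].
    rewrite !cellwise_tcls. apply tdist_tcls_ge. intros s Hs. exact (cellwise_chain_cost _ _ _ Hs).
  - intros p Hp. change (tS C p) with (tcls C (pick_cell p, sqS C (loc (pick_cell p) p))).
    rewrite cellwise_tcls, HF_S by now apply loc_M0, cell_pick_cell.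
    apply (proj2 (Hg 0) p Hp).
Qed.

End Assembly.

Lemma Mtens_colimit_universal : exists! u : Tcar C -> car Y,
  is_mor (Mtens C) Y u /\ (forall k x, u (Mtens_map (A k) C (c k) x) = g k x).
Proof.
  assert (HF : exists F : Mpt -> car C -> car Y, forall m,
    (forall k x, F m (c k x) = g k (tcls (A k) (m, x))) /\
    (forall p, M0 p -> F m (sqS C p) = g 0 (tcls (A 0) (m, sqS (A 0) p))) /\
    (forall y y', 3 * dist Y (F m y) (F m y') <= dist C y y')).
  { exists (fun m => proj1_sig (constructive_indefinite_description _ (cell_factor m))).
    intros m. exact (proj2_sig (constructive_indefinite_description _ (cell_factor m))). }
  destruct HF as [F HF].
  assert (HF_c : forall m k x, F m (c k x) = g k (tcls (A k) (m, x))) by apply HF.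
  assert (HF_S : forall m p, M0 p -> F m (sqS C p) = g 0 (tcls (A 0) (m, sqS (A 0) p)))
    by apply HF.
  exists (cellwise F). split; [split|].
  - apply cellwise_mor; auto. apply HF.
  - intros k x. destruct (tcls_surj (A k) x) as [[m y] ->].
    rewrite Mtens_map_tcls, cellwise_tcls; auto.
  - intros v [_ Hv]. apply functional_extensionality. intros xi.
    destruct (tcls_surj C xi) as [[m y] ->].
    destruct (colimit_jointly_surjective y) as (k & x & ->).
    rewrite cellwise_tcls, HF_c, <- Hv, Mtens_map_tcls; auto.
Qed.

End UniversalProperty.
End Colimit.

Theorem mainTheorem15 (A : nat -> sqraw) (a : forall k, car (A k) -> car (A (S k)))
    (C : sqraw) (c : forall k, car (A k) -> car C) :
  is_chain A a ->
  is_colimit A a C c ->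
  is_colimit (fun k => Mtens (A k)) (fun k => Mtens_map (A k) (A (S k)) (a k))
             (Mtens C) (fun k => Mtens_map (A k) C (c k)).
Proof.
  intros [HA Ha] Hco. pose proof Hco as (HC & Hc & Hca & _).
  split; [|split; [|split]].
  - now apply Mtens_squams.
  - intros k. now apply Mtens_map_mor.
  - intros k x. destruct (tcls_surj (A k) x) as [[m y] ->].
    now rewrite !Mtens_map_tcls, Hca.
  - intros Y g HY Hg Hga. now apply (Mtens_colimit_universal A a C c).
Qed.
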